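(* Let $\alpha>1/2$, $c_0>0$, $\delta_n=n^{-\alpha/(2\alpha+1)}$, suppose $p\le Cn\delta_n^2$ for some $C>0$, let $\theta_{*,p}\in\mathbb R^p$ with $\|\theta_{*,p}\|_\alpha\le c_0$, let $\Pi=N(0,n^{-1/(2\alpha+1)}\Sigma_\alpha^{-1})$ on $\mathbb R^p$ and $\mathcal B_{n,r}=\{\theta\in\mathbb R^p:\|\theta-\theta_{*,p}\|\le\delta_n,\|\theta\|_\alpha\le r\}$. Then for any sufficiently large $r\ge\max(4,2c_0)$ there is a constant $c\equiv c(C,\alpha,c_0,r)>0$ such that $\Pi(\mathcal B_{n,r})\ge e^{-cn\delta_n^2}$.
   Context: $\|\cdot\|$ is the Euclidean norm on $\mathbb R^p$, $\|\theta\|_\alpha^2=\sum_{k=1}^pk^{2\alpha}\theta_k^2$, $\Sigma_\alpha=\mathrm{diag}(1,2^{2\alpha},\dots,p^{2\alpha})$. *)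

From HB Require Import structures.
From mathcomp Require Import all_boot all_order all_algebra.
From mathcomp Require Import all_classical all_reals all_analysis.
Set Implicit Arguments. Unset Strict Implicit. Unset Printing Implicit Defensive.
Import Order.TTheory GRing.Theory Num.Theory.
Local Open Scope classical_set_scope.
Local Open Scope ring_scope.

(* Vectors of R^p are represented as functions nat -> R; only the
   coordinates 0..p-1 are used (coordinate k corresponds to index k+1
   of the paper). *)

Definition upd {R : realType} (v : nat -> R) (q : nat) (x : R) : nat -> R :=
  fun k => if k == q then x else v k.

(* Iterated integral against the product of independent centred normal
   laws N(0, s k ^ 2), k = 0..p-1 : this is the integral of f against the
   Gaussian measure N(0, diag(s 0 ^2, ..., s (p-1) ^2)) on R^p. *)
Fixpoint gauss_iter {R : realType} (p : nat) (s : nat -> R)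
    (f : (nat -> R) -> \bar R) : \bar R :=
  match p with
  | 0 => f (fun _ => 0)
  | q.+1 => (\int[normal_prob 0 (s q)]_x gauss_iter q s (fun v => f (upd v q x)))%E
  end.

Definition gauss_measure {R : realType} (p : nat) (s : nat -> R)
    (B : set (nat -> R)) : \bar R :=
  gauss_iter p s (fun v => (\1_B v)%:E).

Definition eucl_norm {R : realType} (p : nat) (v : nat -> R) : R :=
  Num.sqrt (\sum_(k < p) v k ^+ 2).

Definition alpha_norm {R : realType} (alpha : R) (p : nat) (v : nat -> R) : R :=
  Num.sqrt (\sum_(k < p) ((k.+1)%:R `^ (2 * alpha)) * v k ^+ 2).

Definition delta_n {R : realType} (alpha : R) (n : nat) : R :=
  (n%:R) `^ (- (alpha / (2 * alpha + 1))).

(* standard deviations of the prior N(0, n^{-1/(2alpha+1)} Sigma_alpha^{-1}):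
   variance of coordinate k (0-based) is n^{-1/(2alpha+1)} (k+1)^{-2 alpha} *)
Definition prior_sd {R : realType} (alpha : R) (n : nat) (k : nat) : R :=
  (n%:R) `^ (- (1 / (2 * (2 * alpha + 1)))) * ((k.+1)%:R `^ (- alpha)).

Definition Bnr {R : realType} (alpha : R) (n p : nat) (thetas : nat -> R) (r : R)
  : set (nat -> R) :=
  [set th | eucl_norm p (fun k => th k - thetas k) <= delta_n alpha n
            /\ alpha_norm alpha p th <= r].

From HB Require Import structures.
From mathcomp Require Import all_boot all_order all_algebra.
From mathcomp Require Import all_classical all_reals all_analysis.
From mathcomp Require Import measurable_realfun.
From mathcomp Require Import ring lra.
Set Implicit Arguments.
Unset Strict Implicit.
Unset Printing Implicit Defensive.
Import Order.TTheory GRing.Theory Num.Theory.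
Local Open Scope ring_scope.

(* The prior is the product of the centred normal laws N(0, s_k^2) with
   s_k^-2 = M (k+1)^(2 alpha), where M = n delta_n^2 = n^(1/(2 alpha + 1)) and
   delta_n = M^(-alpha).  B_{n,r} contains the box of half-widths
   w_k = min(s_k, delta_n / sqrt p) around theta_*: on it the Euclidean distance
   to theta_* is at most delta_n, and
   ||theta||_alpha^2 <= 2 c0^2 + 2 (p^alpha delta_n)^2 <= 2 c0^2 + 2 C^(2 alpha)
   because p <= C M.  A normal law N(0, s^2) gives [x - w, x + w], w <= s, mass
   at least e^-2 (w / s) e^(-x^2 / s^2), so the box has mass at least
   exp (- sum_k (2 + theta_k^2 / s_k^2 + ln (s_k / w_k))).  There
   sum_k theta_k^2 / s_k^2 = M ||theta_*||_alpha^2, and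
   ln (s_k / w_k) <= |ln C| / 2 + alpha ln (M / (k+1))
                  <= |ln C| / 2 + 2 alpha sqrt (M / (k+1)),
   which sums over k < p <= C M to O(M) since
   sum_(k < p) (k+1)^(-1/2) <= 2 sqrt p. *)

(* Needed because [gauss_iter] of an indicator is not known to be measurable:
   for nonnegative functions the integral is a supremum over simple minorants,
   hence monotone without any measurability. *)
Lemma ge0_le_integral_nonmeasurable d (T : measurableType d) (R : realType)
    (mu : {measure set T -> \bar R}) (f g : T -> \bar R) :
  (forall x, 0 <= f x)%E -> (forall x, f x <= g x)%E ->
  (\int[mu]_x f x <= \int[mu]_x g x)%E.
Proof.
move=> f0 fg.
have g0 x : (0 <= g x)%E by exact: le_trans (f0 x) (fg x).
rewrite !ge0_integralE //; apply: ereal_sup_le => _ [h /= hf <-].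
exists h => //= x; apply: le_trans (hf x) _.
by rewrite /patch /=; case: ifP.
Qed.

Section gauss_iter.
Variable R : realType.
Implicit Types (p : nat) (s : nat -> R) (f g : (nat -> R) -> \bar R).

Lemma gauss_iter_ge0 p s f : (forall v, 0 <= f v)%E -> (0 <= gauss_iter p s f)%E.
Proof.
elim: p f => [|q IH] f f0 //=.
by apply: integral_ge0 => x _; apply: IH.
Qed.

Lemma le_gauss_iter p s f g : (forall v, 0 <= f v)%E -> (forall v, f v <= g v)%E ->
  (gauss_iter p s f <= gauss_iter p s g)%E.
Proof.
elim: p f g => [|q IH] f g f0 fg //=.
apply: ge0_le_integral_nonmeasurable => x; first exact: gauss_iter_ge0.
exact: IH.
Qed.

Lemma gauss_iter0 p s : gauss_iter p s (fun _ => 0%E) = 0%E.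
Proof.
elim: p => [|q IH] //=.
by under eq_integral do rewrite IH; rewrite integral0.
Qed.

Lemma gauss_iter_prod_indic p s (I : nat -> set R) : (forall k, measurable (I k)) ->
  gauss_iter p s (fun v => (\prod_(k < p) \1_(I k) (v k))%:E) =
  (\prod_(k < p) normal_prob 0 (s k) (I k))%E.
Proof.
move=> mI; elim: p => [|q IH] /=; first by rewrite !big_ord0.
have inner x : gauss_iter q s
    (fun v => (\prod_(k < q.+1) (\1_(I k) (upd v q x k) : R))%:E) =
    ((\1_(I q) x)%:E * \prod_(k < q) normal_prob 0 (s k) (I k))%E.
  have -> : (fun v => (\prod_(k < q.+1) (\1_(I k) (upd v q x k) : R))%:E) =
      (fun v => (\prod_(k < q) \1_(I k) (v k) * \1_(I q) x)%:E).
    apply/funext => v; rewrite big_ord_recr /= /upd eqxx.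
    by congr (_ * _)%:E; apply: eq_bigr => k _; rewrite ltn_eqF.
  rewrite /indic; case: (x \in I q) => /=.
    by rewrite mul1e -IH; under [X in gauss_iter _ _ X]funext do rewrite mulr1.
  rewrite mul0e; under [X in gauss_iter _ _ X]funext do rewrite mulr0.
  exact: gauss_iter0.
under eq_integral do rewrite inner muleC.
rewrite ge0_integralZl //; last 2 first.
- by apply/measurable_EFinP; exact: measurable_indic (mI q).
- by apply: prode_ge0 => k _.
rewrite integral_indic ?setIT //; last exact: mI.
by rewrite [in RHS]big_ord_recr.
Qed.

Lemma gauss_measure_box_le p s (I : nat -> set R) (B : set (nat -> R)) :
  (forall k, measurable (I k)) ->
  (forall v, (forall k, (k < p)%N -> I k (v k)) -> B v) ->
  (\prod_(k < p) normal_prob 0 (s k) (I k) <= gauss_measure p s B)%E.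
Proof.
move=> mI IB; rewrite -gauss_iter_prod_indic //.
apply: le_gauss_iter => v; first by rewrite lee_fin prodr_ge0.
have [inI|notinI] := pselect (forall k : 'I_p, I k (v k)).
  have Bv : B v by apply: IB => k kp; exact: (inI (Ordinal kp)).
  by rewrite big1 => [|k _]; rewrite indicE mem_set.
have [k nIk] : exists k : 'I_p, ~ I k (v k) by exact/existsNP.
by rewrite (bigD1 k) //= indicE memNset // mul0r lee_fin.
Qed.

End gauss_iter.

Section normal_bounds.
Variable R : realType.
Implicit Types s a w x : R.

Lemma normal_peak_ge s : 0 < s -> (3 * s)^-1 <= normal_peak s.
Proof.
move=> s0; have pi4 : pi < 4 :> R by have := @pihalf_lt2 R; lra.
rewrite /normal_peak lef_pV2 ?posrE ?mulr_gt0 ?sqrtr_gt0 //; last first.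
  by rewrite pmulrn_lgt0 // mulr_gt0 ?pi_gt0 ?exprn_gt0.
rewrite -(@ger0_norm _ (3 * s)); last by rewrite mulr_ge0 // ltW.
rewrite -sqrtr_sqr ler_sqrt; last by rewrite exprn_ge0 // mulr_ge0 // ltW.
rewrite mulr2n !expr2.
have : 0 < s * s by rewrite mulr_gt0.
nra.
Qed.

Lemma normal_pdf_near_ge s a w x : 0 < s -> w <= s -> `|x - a| <= w ->
  expR (- (1 + a ^+ 2 / s ^+ 2)) / (3 * s) <= normal_pdf 0 s x.
Proof.
move=> s0 ws xa; rewrite normal_pdfE ?gt_eqF // mulrC.
apply: ler_pM; [by rewrite invr_ge0 mulr_ge0 // ltW | exact: expR_ge0 |
  exact: normal_peak_ge |].
rewrite /normal_fun subr0 ler_expR mulNr lerN2 ler_pdivrMr ?pmulrn_lgt0 ?exprn_gt0 //.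
have -> : (1 + a ^+ 2 / s ^+ 2) * (s ^+ 2 *+ 2) = 2 * (s ^+ 2 + a ^+ 2).
  by field; rewrite gt_eqF.
have : (x - a) ^+ 2 <= s ^+ 2.
  by rewrite -real_normK ?num_real //; have := normr_ge0 (x - a); nra.
have := sqr_ge0 (x - 2 * a); nra.
Qed.

Lemma normal_prob_itv_ge s a w : 0 < w <= s ->
  ((expR (- (2 + a ^+ 2 / s ^+ 2 + ln (s / w))))%:E
    <= normal_prob 0 s `[(a - w)%R, (a + w)%R]%classic)%E.
Proof.
move=> /andP[w0 ws]; have s0 : 0 < s by exact: lt_le_trans ws.
set K := expR (- (1 + a ^+ 2 / s ^+ 2)) / (3 * s).
apply: (@le_trans _ _ (K * (2 * w))%:E).
  set P := expR (- (1 + a ^+ 2 / s ^+ 2)) * (w / s).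
  have P0 : 0 < P by rewrite mulr_gt0 ?expR_gt0 ?divr_gt0.
  have -> : expR (- (2 + a ^+ 2 / s ^+ 2 + ln (s / w))) = expR (-1) * P.
    rewrite /P; have -> : w / s = expR (- ln (s / w)).
      by rewrite expRN lnK ?posrE ?divr_gt0 // invf_div.
    by rewrite -!expRD; congr expR; ring.
  have -> : K * (2 * w) = 2 / 3 * P by rewrite /K /P; field; rewrite gt_eqF.
  have e_ge2 : 2 <= expR 1 :> R by have := @expR_ge1Dx R 1; lra.
  have : expR (-1) <= 2^-1 :> R by rewrite expRN lef_pV2 ?posrE ?expR_gt0.
  rewrite lee_fin ler_pM2r //; lra.
have -> : (K * (2 * w))%:E =
    (\int[lebesgue_measure]_(x in `[(a - w)%R, (a + w)%R]%classic) K%:E)%E.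
  rewrite integral_cst //= lebesgue_measure_itv /= lte_fin ifT; last lra.
  by rewrite -EFinD -EFinM; congr (K * _)%:E; ring.
apply: ge0_le_integral => //.
- by move=> x _; rewrite lee_fin divr_ge0 ?expR_ge0 ?mulr_ge0 // ltW.
- apply/measurable_EFinP/measurable_funTS; exact: measurable_normal_pdf.
move=> x; rewrite /= in_itv /= -ler_distl => xa.
by rewrite lee_fin; apply: normal_pdf_near_ge xa.
Qed.

End normal_bounds.

Lemma lee_prod_EFin (R : realType) (I : Type) (r : seq I) (P : pred I)
    (f : I -> R) (g : I -> \bar R) :
  (forall i, P i -> 0 <= f i) -> (forall i, P i -> ((f i)%:E <= g i)%E) ->
  (\prod_(i <- r | P i) (f i)%:E <= \prod_(i <- r | P i) g i)%E.
Proof.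
move=> f0 fg; suff /andP[] : (0 <= \prod_(i <- r | P i) (f i)%:E <=
    \prod_(i <- r | P i) g i)%E by [].
elim/big_ind2: _ => [|x1 y1 x2 y2 /andP[x10 xy1] /andP[x20 xy2]|i Pi].
- by rewrite lee01 lexx.
- by rewrite mule_ge0 //= lee_pmul.
- by rewrite lee_fin f0 //= fg.
Qed.

Lemma gauss_measure_box_ge (R : realType) p (s w a : nat -> R) (B : set (nat -> R)) :
  (forall k, (k < p)%N -> 0 < w k <= s k) ->
  (forall v, (forall k, (k < p)%N -> `|v k - a k| <= w k) -> B v) ->
  ((expR (- \sum_(k < p) (2 + a k ^+ 2 / s k ^+ 2 + ln (s k / w k))))%:E
    <= gauss_measure p s B)%E.
Proof.
move=> ws boxB.
pose I k := `[(a k - w k)%R, (a k + w k)%R]%classic.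
apply: (@le_trans _ _ (\prod_(k < p) normal_prob 0 (s k) (I k))%E); last first.
  apply: gauss_measure_box_le => [k|v vI]; first exact: measurable_itv.
  by apply: boxB => k kp; have := vI k kp; rewrite /I /= in_itv /= -ler_distl.
rewrite -sumrN expR_sum -prodEFin; apply: lee_prod_EFin => [k _|k _].
  exact: expR_ge0.
exact: normal_prob_itv_ge (ws k (ltn_ord k)).
Qed.

Section real_facts.
Variable R : realType.

Lemma sqr_powR (x a : R) : (x `^ a) ^+ 2 = x `^ (2 * a).
Proof. by rewrite -powR_mulrn ?powR_ge0 // -powRrM mulrC. Qed.

Lemma ln_le_2sqrt (x : R) : 0 < x -> ln x <= 2 * Num.sqrt x.
Proof.
move=> x0; have sx0 : 0 < Num.sqrt x by rewrite sqrtr_gt0.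
rewrite -[x in ln x](sqr_sqrtr (ltW x0)) lnXn // mulr2n.
have := ln_sublinear sx0; lra.
Qed.

Lemma sum_invsqrt_le (p : nat) :
  \sum_(k < p) (Num.sqrt (k.+1)%:R)^-1 <= 2 * Num.sqrt (p%:R : R).
Proof.
elim: p => [|p IH]; first by rewrite big_ord0 sqrtr0 mulr0.
rewrite big_ord_recr /=.
(* 1 / t <= 2 (t - s) because t^2 - s^2 = 1 and s <= t *)
set s := Num.sqrt (p%:R : R); set t := Num.sqrt (p.+1%:R : R).
have s0 : 0 <= s by apply: sqrtr_ge0.
have t0 : 0 < t by rewrite sqrtr_gt0 ltr0n.
have ts : t ^+ 2 = s ^+ 2 + 1 by rewrite !sqr_sqrtr ?ler0n // -natr1.
apply: le_trans (lerD IH (lexx _)) _.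
rewrite -subr_ge0.
have -> : 2 * t - (2 * s + t^-1) = (2 * t * t - 2 * s * t - 1) / t.
  by field; rewrite gt_eqF.
apply: divr_ge0; last exact: ltW.
have := sqr_ge0 (s - t); nra.
Qed.

End real_facts.

Section norms.
Variables (R : realType) (p : nat).
Implicit Types (x y : nat -> R).

Lemma alpha_norm_ge0 alpha x : 0 <= alpha_norm alpha p x.
Proof. exact: sqrtr_ge0. Qed.

Lemma eucl_norm_le_sup x h : 0 <= h -> (forall k, (k < p)%N -> `|x k| <= h) ->
  eucl_norm p x <= Num.sqrt p%:R * h.
Proof.
move=> h0 xh; rewrite -(ger0_norm h0) -sqrtr_sqr -sqrtrM ?ler0n // ler_sqrt.
  rewrite mulr_natl -[p in _ *+ p]card_ord -sumr_const.
  apply: ler_sum => k _; rewrite -real_normK ?num_real //.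
  by have := xh k (ltn_ord k); have := normr_ge0 (x k); nra.
by rewrite mulr_ge0 ?ler0n ?sqr_ge0.
Qed.

Lemma alpha_norm_le_eucl alpha x : 0 <= alpha ->
  alpha_norm alpha p x <= p%:R `^ alpha * eucl_norm p x.
Proof.
move=> alpha0; rewrite /alpha_norm /eucl_norm -(ger0_norm (powR_ge0 p%:R alpha)).
rewrite -sqrtr_sqr -sqrtrM ?sqr_ge0 // ler_sqrt; last first.
  by rewrite mulr_ge0 ?sqr_ge0 // sumr_ge0 // => k _; rewrite sqr_ge0.
rewrite sqr_powR mulr_sumr; apply: ler_sum => k _.
rewrite ler_wpM2r ?sqr_ge0 //; apply: ge0_ler_powR; rewrite ?nnegrE ?ler0n //.
  by rewrite mulr_ge0.
by rewrite ler_nat.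
Qed.

Lemma alpha_norm_sqr_le alpha x y :
  alpha_norm alpha p x ^+ 2 <=
  2 * alpha_norm alpha p y ^+ 2 + 2 * alpha_norm alpha p (fun k => x k - y k) ^+ 2.
Proof.
have sum_ge0 z : 0 <= \sum_(k < p) (k.+1)%:R `^ (2 * alpha) * z k ^+ 2.
  by rewrite sumr_ge0 // => k _; rewrite mulr_ge0 ?powR_ge0 ?sqr_ge0.
rewrite /alpha_norm !sqr_sqrtr // !mulr_sumr -big_split /=; apply: ler_sum => k _.
have := powR_ge0 (k.+1)%:R (2 * alpha); have := sqr_ge0 (x k - 2 * y k).
set W := _ `^ _; nra.
Qed.

End norms.

Section rates.
Variables (R : realType) (alpha : R) (n : nat).
Hypotheses (alpha_gt0 : 0 < alpha) (n_gt0 : (0 < n)%N).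

Let M := n%:R * delta_n alpha n ^+ 2.

Let two_alpha1_neq0 : 2 * alpha + 1 != 0.
Proof. by rewrite gt_eqF // addr_gt0 // mulr_gt0. Qed.

Lemma n_delta_n_sqr : M = n%:R `^ (1 / (2 * alpha + 1)).
Proof.
rewrite /M /delta_n sqr_powR -{1}(powRr1 (ler0n _ n)) -powRD; last first.
  by rewrite pnatr_eq0 -lt0n n_gt0 implybT.
by congr powR; field.
Qed.

Lemma n_delta_n_sqr_gt0 : 0 < M.
Proof. by rewrite n_delta_n_sqr powR_gt0 // ltr0n. Qed.

Lemma delta_nE : delta_n alpha n = M `^ (- alpha).
Proof.
by rewrite n_delta_n_sqr -powRrM /delta_n; congr powR; field.
Qed.

Lemma prior_sd_gt0 k : 0 < prior_sd alpha n k.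
Proof. by rewrite mulr_gt0 // powR_gt0 // ltr0n. Qed.

Lemma prior_sd_sqr k : prior_sd alpha n k ^+ 2 = (M * (k.+1)%:R `^ (2 * alpha))^-1.
Proof.
rewrite /prior_sd exprMn !sqr_powR n_delta_n_sqr [in RHS]invfM -!powRN.
by congr (_ * _); congr powR; field.
Qed.

End rates.

Section prior_box.
Variables (R : realType) (alpha c0 C : R) (n p : nat) (a : nat -> R).
Hypotheses (alpha_gt0 : 0 < alpha) (C_gt0 : 0 < C) (n_gt0 : (0 < n)%N).

Let M := n%:R * delta_n alpha n ^+ 2.
Hypotheses (p_le : p%:R <= C * M) (a_le : alpha_norm alpha p a <= c0).

Let M_gt0 : 0 < M := n_delta_n_sqr_gt0 alpha_gt0 n_gt0.
Let s := prior_sd alpha n.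
(* for p = 0 this is delta_n / 0 = 0, but then the box has no coordinates *)
Let h := delta_n alpha n / Num.sqrt p%:R.
Let w k := Num.min (s k) h.

Lemma powR_p_delta_n_le : p%:R `^ alpha * delta_n alpha n <= C `^ alpha.
Proof.
rewrite delta_nE //; apply: (@le_trans _ _ ((C * M) `^ alpha * M `^ (- alpha))).
  rewrite ler_wpM2r ?powR_ge0 //; apply: ge0_ler_powR => //.
  - exact: ltW.
  - by rewrite nnegrE.
  - by rewrite nnegrE mulr_ge0 // ltW.
rewrite powRM ?(ltW C_gt0) ?(ltW M_gt0) // powRN -mulrA mulfV ?mulr1 //.
by rewrite gt_eqF // powR_gt0.
Qed.

Lemma box_sub_Bnr r : Num.sqrt (2 * c0 ^+ 2 + 2 * (C `^ alpha) ^+ 2) <= r ->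
  forall v, (forall k, (k < p)%N -> `|v k - a k| <= w k) -> Bnr alpha n p a r v.
Proof.
move=> r_ge v vw.
have vh k : (k < p)%N -> `|v k - a k| <= h.
  by move=> kp; apply: le_trans (vw k kp) _; rewrite ge_min lexx orbT.
have d0 : 0 < delta_n alpha n by rewrite delta_nE // powR_gt0.
have h0 : 0 <= h by rewrite divr_ge0 ?sqrtr_ge0 // ltW.
have eucl : eucl_norm p (fun k => v k - a k) <= delta_n alpha n.
  apply: le_trans (eucl_norm_le_sup h0 vh) _.
  have [->|p_gt0] := posnP p; first by rewrite sqrtr0 mul0r ltW.
  by rewrite mulrC divfK // gt_eqF // sqrtr_gt0 ltr0n.
have dif : alpha_norm alpha p (fun k => v k - a k) <= C `^ alpha.
  apply: le_trans (alpha_norm_le_eucl _ _ (ltW alpha_gt0)) _.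
  by apply: le_trans _ powR_p_delta_n_le; rewrite ler_wpM2l ?powR_ge0.
split => //; apply: le_trans r_ge.
rewrite -[alpha_norm _ _ _]ger0_norm ?alpha_norm_ge0 // -sqrtr_sqr ler_sqrt; last first.
  by rewrite addr_ge0 // mulr_ge0 // sqr_ge0.
apply: le_trans (alpha_norm_sqr_le p alpha v a) _.
have := alpha_norm_ge0 p alpha a; have := alpha_norm_ge0 p alpha (fun k => v k - a k).
have := powR_ge0 C alpha; have := a_le; nra.
Qed.

Lemma sum_sqr_div_prior_sd :
  \sum_(k < p) a k ^+ 2 / s k ^+ 2 = M * alpha_norm alpha p a ^+ 2.
Proof.
rewrite /alpha_norm sqr_sqrtr; last first.
  by rewrite sumr_ge0 // => k _; rewrite mulr_ge0 ?powR_ge0 ?sqr_ge0.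
rewrite mulr_sumr; apply: eq_bigr => k _.
by rewrite /s prior_sd_sqr // invrK /M; ring.
Qed.

Lemma ln_prior_width_le k : (k < p)%N ->
  ln (s k / w k) <= `|ln C| / 2 + 2 * alpha * Num.sqrt (M / k.+1%:R).
Proof.
move=> kp; have s0 : 0 < s k by exact: prior_sd_gt0.
have rhs0 : 0 <= `|ln C| / 2 + 2 * alpha * Num.sqrt (M / k.+1%:R).
  by rewrite addr_ge0 ?divr_ge0 // mulr_ge0 ?sqrtr_ge0 // mulr_ge0 // ltW.
rewrite /w /=; have [sh|hs] := leP (s k) h.
  by rewrite divff ?gt_eqF // ln1.
have p0 : (0 : R) < p%:R by rewrite ltr0n (leq_ltn_trans _ kp).
have d0 : 0 < delta_n alpha n by rewrite delta_nE // powR_gt0.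
have sp0 : 0 < Num.sqrt (p%:R : R) by rewrite sqrtr_gt0.
have ls : 2 * ln (s k) = - (ln M + 2 * alpha * ln k.+1%:R).
  have W0 : 0 < k.+1%:R `^ (2 * alpha) by rewrite powR_gt0 // ltr0n.
  have MW0 : 0 < M * k.+1%:R `^ (2 * alpha) by exact: mulr_gt0.
  by rewrite mulr_natl -lnXn // /s prior_sd_sqr // lnV ?posrE // lnM ?posrE // ln_powR.
have ld : ln (delta_n alpha n) = - alpha * ln M by rewrite delta_nE // ln_powR.
have lp : 2 * ln (Num.sqrt (p%:R : R)) <= ln C + ln M.
  rewrite mulr_natl -lnXn // sqr_sqrtr ?ler0n // -lnM ?posrE //.
  by rewrite ler_ln ?posrE //; exact: mulr_gt0.
have lk : ln (M / k.+1%:R) <= 2 * Num.sqrt (M / k.+1%:R).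
  by apply: ln_le_2sqrt; rewrite divr_gt0.
rewrite ln_div ?posrE ?divr_gt0 // ln_div ?posrE // ld.
rewrite ln_div ?posrE // in lk.
have := ler_wpM2l (ltW alpha_gt0) lk; have := ler_norm (ln C); lra.
Qed.

Lemma sum_ln_prior_width_le :
  \sum_(k < p) ln (s k / w k) <= (C * `|ln C| / 2 + 4 * alpha * Num.sqrt C) * M.
Proof.
apply: le_trans (ler_sum _ (fun k _ => ln_prior_width_le (ltn_ord k))) _.
rewrite big_split /= sumr_const card_ord -mulr_sumr.
have -> : \sum_(k < p) Num.sqrt (M / k.+1%:R) =
    Num.sqrt M * \sum_(k < p) (Num.sqrt k.+1%:R)^-1.
  by rewrite mulr_sumr; apply: eq_bigr => k _; rewrite sqrtrM ?sqrtrV // ltW.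
have sum_le := sum_invsqrt_le R p.
have sp : Num.sqrt (p%:R : R) <= Num.sqrt C * Num.sqrt M.
  have CM0 : 0 <= C * M by rewrite mulr_ge0 // ltW.
  by rewrite -sqrtrM ?ler_sqrt // ltW.
have sM : Num.sqrt M * Num.sqrt M = M by rewrite -expr2 sqr_sqrtr // ltW.
have sM0 := sqrtr_ge0 M; have lC0 : 0 <= `|ln C| / 2 by rewrite divr_ge0.
have sum_sqrt_le : Num.sqrt M * \sum_(k < p) (Num.sqrt k.+1%:R)^-1 <=
    2 * Num.sqrt C * M.
  apply: le_trans (ler_wpM2l sM0 (le_trans sum_le (ler_wpM2l _ sp))) _ => //.
  by rewrite mulrCA (mulrCA (Num.sqrt M)) sM mulrA.
have := ler_wpM2r lC0 p_le; have := ler_wpM2l (ltW alpha_gt0) sum_sqrt_le.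
rewrite -mulr_natl; lra.
Qed.

Lemma prior_box_exponent_le :
  \sum_(k < p) (2 + a k ^+ 2 / s k ^+ 2 + ln (s k / w k)) <=
  (2 * C + c0 ^+ 2 + C * `|ln C| / 2 + 4 * alpha * Num.sqrt C) * M.
Proof.
rewrite !big_split /= sumr_const card_ord sum_sqr_div_prior_sd.
have a2_le : alpha_norm alpha p a ^+ 2 <= c0 ^+ 2.
  by have := alpha_norm_ge0 p alpha a; have := a_le; nra.
have := ler_wpM2l (ltW M_gt0) a2_le; have := sum_ln_prior_width_le.
have := p_le; rewrite -mulr_natl; lra.
Qed.

Lemma gauss_measure_Bnr_ge r :
  Num.sqrt (2 * c0 ^+ 2 + 2 * (C `^ alpha) ^+ 2) <= r ->
  ((expR (- ((2 * C + c0 ^+ 2 + C * `|ln C| / 2 + 4 * alpha * Num.sqrt C) * M)))%:E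
    <= gauss_measure p s (Bnr alpha n p a r))%E.
Proof.
move=> r_ge; apply: le_trans (gauss_measure_box_ge (w := w) _ (box_sub_Bnr r_ge)).
  by rewrite lee_fin ler_expR lerN2 prior_box_exponent_le.
move=> k kp; rewrite ge_min lexx andbT lt_min prior_sd_gt0 //=.
rewrite divr_gt0 ?sqrtr_gt0 ?ltr0n ?(leq_ltn_trans _ kp) //.
by rewrite delta_nE // powR_gt0.
Qed.

End prior_box.

Theorem lemma6p11 (R : realType) (alpha c0 C : R) :
  1 / 2 < alpha -> 0 < c0 -> 0 < C ->
  exists r0 : R, forall r : R, r0 <= r -> Num.max 4 (2 * c0) <= r ->
    exists c : R, 0 < c /\
      forall (n p : nat) (thetas : nat -> R),
        (0 < n)%N ->
        p%:R <= C * n%:R * delta_n alpha n ^+ 2 ->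
        alpha_norm alpha p thetas <= c0 ->
        ((expR (- (c * n%:R * delta_n alpha n ^+ 2)))%:E
          <= gauss_measure p (prior_sd alpha n) (Bnr alpha n p thetas r))%E.
Proof.
move=> alpha_gt c0_gt0 C_gt0; have alpha_gt0 : 0 < alpha by lra.
exists (Num.sqrt (2 * c0 ^+ 2 + 2 * (C `^ alpha) ^+ 2)) => r r_ge _.
exists (2 * C + c0 ^+ 2 + C * `|ln C| / 2 + 4 * alpha * Num.sqrt C); split.
  have := sqrtr_ge0 C; have := normr_ge0 (ln C); have := sqr_ge0 c0; nra.
move=> n p a n_gt0 p_le a_le; rewrite -(mulrA C) in p_le; rewrite -(mulrA _ n%:R).
exact: gauss_measure_Bnr_ge.
Qed.
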